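(* Let $K$ be a valued field and $d,r\ge1$. Then any finite set $X\subseteq K^d$ with $|X|\ge(d+1)(r-1)+1$ can be partitioned into sets $X_1,\dots,X_r$ with $|X_i|=d+1$ for $i<r$, $|X_r|=|X|-(d+1)(r-1)$, and $\operatorname{conv}(X_i)\supseteq\operatorname{conv}(X_j)$ for all $1\le i\le j\le r$. In particular $\bigcap_{i=1}^r\operatorname{conv}(X_i)\supseteq X_r\ne\emptyset$.
   Context: $K$ is a field with valuation $\nu$ and valuation ring $\mathcal{O}=\{x:\nu(x)\ge0\}$. For $Y\subseteq K^d$, $\operatorname{conv}(Y)=\{\sum_{i=1}^n\alpha_iy_i: n\ge1,y_i\in Y,\alpha_i\in\mathcal{O},\sum_i\alpha_i=1\}$. *)

From HB Require Import structures.
From mathcomp Require Import all_boot all_order all_algebra.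
From mathcomp Require Export finmap.
Set Implicit Arguments. Unset Strict Implicit. Unset Printing Implicit Defensive.
Import Order.TTheory GRing.Theory.
Local Open Scope ring_scope.

(* Values of a valuation: an element of the value group G, or None = +infinity. *)
Definition vle (G : zmodType) (le : rel G) (a b : option G) : bool :=
  match a, b with
  | _, None => true
  | None, Some _ => false
  | Some x, Some y => le x y
  end.

Definition vadd (G : zmodType) (a b : option G) : option G :=
  match a, b with
  | Some x, Some y => Some (x + y)
  | _, _ => None
  end.

Definition ordered_abelian_group (G : zmodType) (le : rel G) : Prop :=
  [/\ reflexive le, antisymmetric le, transitive le, total le
    & forall a b c : G, le a b -> le (a + c) (b + c)].

Definition is_valuation (K : fieldType) (G : zmodType) (le : rel G)
    (nu : K -> option G) : Prop :=
  [/\ ordered_abelian_group le,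
      (forall x : K, nu x = None <-> x = 0),
      (forall x y : K, nu (x * y) = vadd (nu x) (nu y))
    & (forall x y : K, vle le (nu x) (nu (x + y)) || vle le (nu y) (nu (x + y)))].

Definition val_ring (K : fieldType) (G : zmodType) (le : rel G)
    (nu : K -> option G) (x : K) : bool := vle le (Some 0) (nu x).

Definition vconv (K : fieldType) (G : zmodType) (le : rel G)
    (nu : K -> option G) (d : nat) (Y : 'rV[K]_d -> Prop) (p : 'rV[K]_d) : Prop :=
  exists (n : nat) (y : 'I_n -> 'rV[K]_d) (alpha : 'I_n -> K),
    [/\ (0 < n)%N, (forall i, Y (y i)), (forall i, val_ring le nu (alpha i)),
        \sum_(i < n) alpha i = 1
      & p = \sum_(i < n) alpha i *: y i].

From mathcomp Require Import all_boot all_order all_algebra finmap.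
Set Implicit Arguments. Unset Strict Implicit. Unset Printing Implicit Defensive.
Import Order.TTheory GRing.Theory.
Local Open Scope ring_scope.

(* Write O for the valuation ring.  The heart of the proof is a Carathéodory
   theorem for O-modules: finitely many vectors of K^n lie in the O-span of at
   most n of them (olin_few_generators).  It is Gaussian elimination in which,
   to stay inside O, each pivot is chosen of minimal valuation.  Homogenizing
   x |-> (1, x) turns O-affine combinations in K^d (the hull vconv) into
   O-linear combinations in K^(1+d), so every finite X ⊆ K^d lies in the O-hull
   of at most d+1 of its points (ohull_caratheodory).  Removing such a subset,
   padded to exactly d+1 points, again and again yields parts X_1, X_2, ... each
   lying in the O-hull of every earlier one (nested_ohull_partition); since
   O-hulls are transitive, the theorem follows. *)

Lemma vle_trans (G : zmodType) (le : rel G) : transitive le -> transitive (vle le).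
Proof. by move=> le_trans [b|] [a|] [c|] //=; apply: le_trans. Qed.

Lemma vle_total (G : zmodType) (le : rel G) : total le -> total (vle le).
Proof. by move=> le_total [a|] [b|] //=; apply: le_total. Qed.

(* An ordered abelian group has no element of order two; this gives nu (-1) = 0. *)
Lemma ordered_group_double_eq0 (G : zmodType) (le : rel G) (g : G) :
  ordered_abelian_group le -> g + g = 0 -> g = 0.
Proof.
case=> _ le_anti _ le_total le_add gg0; apply: le_anti.
case/orP: (le_total 0 g) => [g_ge0 | g_le0].
- by rewrite g_ge0 andbT; have := le_add _ _ g g_ge0; rewrite add0r gg0.
- by rewrite g_le0; have := le_add _ _ g g_le0; rewrite add0r gg0.
Qed.

Lemma exists_min_in (T : eqType) (r : rel T) (s : seq T) :
  total r -> transitive r -> s != [::] ->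
  exists2 p, p \in s & forall i, i \in s -> r p i.
Proof.
move=> r_total r_trans; have := sort_sorted r_total s; have := mem_sort r s.
case: (sort r s) => [|p rest] mem_s sorted_s s_nonempty.
  by move: s_nonempty; case: s mem_s => // x s /(_ x); rewrite inE eqxx.
exists p; first by rewrite -mem_s mem_head.
move=> i; rewrite -mem_s inE => /predU1P [-> | i_rest].
  by case/orP: (r_total p p).
by have /allP := order_path_min r_trans sorted_s; apply.
Qed.

Section ValuedField.
Variables (K : fieldType) (G : zmodType) (le : rel G) (nu : K -> option G).
Hypothesis nu_valuation : is_valuation le nu.

(* nu 1 = 0, because nu 1 = nu 1 + nu 1. *)
Lemma valuation1 : nu 1 = Some 0.
Proof.
case: nu_valuation => _ nu_eq0 nuM _.
case E: (nu 1) => [g|]; last by move/nu_eq0/eqP: E; rewrite oner_eq0.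
have := nuM 1 1; rewrite mulr1 E => -[/(congr1 (fun x => x - g))].
by rewrite addrK subrr => <-.
Qed.

Lemma val_ring1 : val_ring le nu 1.
Proof. by rewrite /val_ring valuation1 /=; case: nu_valuation => -[]. Qed.

Lemma val_ringM x y :
  val_ring le nu x -> val_ring le nu y -> val_ring le nu (x * y).
Proof.
case: nu_valuation => -[_ _ le_trans _ le_add] _ nuM _.
rewrite /val_ring nuM; case: (nu x) => [a|] //; case: (nu y) => [b|] //= a_ge0 b_ge0.
by apply: le_trans b_ge0 _; have := le_add _ _ b a_ge0; rewrite add0r.
Qed.

(* -1 is a unit of the valuation ring, since nu (-1) + nu (-1) = nu 1 = 0. *)
Lemma val_ringN x : val_ring le nu x -> val_ring le nu (- x).
Proof.
case: nu_valuation => oag nu_eq0 nuM _.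
have nuN1 : nu (-1) = Some 0.
  case E: (nu (-1)) => [g|]; last by move/nu_eq0/eqP: E; rewrite oppr_eq0 oner_eq0.
  have := nuM (-1) (-1); rewrite mulrNN mulr1 valuation1 E => -[gg0].
  by rewrite (ordered_group_double_eq0 oag (esym gg0)).
rewrite -mulN1r; apply: val_ringM; rewrite /val_ring nuN1 /=.
by case: oag.
Qed.

Lemma val_ring_div a b :
  b != 0 -> vle le (nu b) (nu a) -> val_ring le nu (a / b).
Proof.
case: nu_valuation => -[_ _ _ _ le_add] nu_eq0 nuM _ b_neq0.
have -> : nu a = vadd (nu (a / b)) (nu b) by rewrite -nuM divfK.
rewrite /val_ring; case E: (nu b) => [g|]; last first.
  by move/nu_eq0/eqP: E; rewrite (negbTE b_neq0).
case: (nu (a / b)) => [h|] //= /(le_add _ _ (- g)).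
by rewrite addrN addrK.
Qed.

Lemma pivot_or_zero (I : eqType) (a : I -> K) (s : seq I) :
  (forall i, i \in s -> a i = 0) \/
  exists2 p, p \in s & a p != 0 /\ forall i, i \in s -> val_ring le nu (a i / a p).
Proof.
case: nu_valuation => -[_ _ le_trans le_total _] nu_eq0 _ _.
have [-> | s_neq] := eqVneq s [::]; first by left.
pose r := [rel i j | vle le (nu (a i)) (nu (a j))].
have r_total : total r by move=> i j; apply: vle_total.
have r_trans : transitive r by move=> j i k; apply: vle_trans.
have [p sp p_min] := exists_min_in r_total r_trans s_neq.
have [ap0 | ap_neq0] := eqVneq (a p) 0; [left | right].
  move=> i /p_min; rewrite /r /= ap0 (proj2 (nu_eq0 0) erefl).
  by case E: (nu (a i)) => // _; apply/nu_eq0.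
by exists p => //; split=> // i /p_min; apply: val_ring_div.
Qed.

Inductive olin (V : lmodType K) (S : V -> Prop) : V -> Prop :=
  | olin0 : olin S 0
  | olin_cons a s x : val_ring le nu a -> S s -> olin S x -> olin S (a *: s + x).

Section OSpan.
Variable V : lmodType K.
Implicit Types (S Y : V -> Prop) (x y : V).

Lemma olin_mem S x : S x -> olin S x.
Proof.
by move=> Sx; rewrite -[x]addr0 -[x]scale1r; apply: olin_cons val_ring1 Sx (olin0 S).
Qed.

Lemma olinD S x y : olin S x -> olin S y -> olin S (x + y).
Proof.
elim=> [|a s x' Oa Ss _ IH] Sy; first by rewrite add0r.
by rewrite -addrA; apply: olin_cons (IH Sy).
Qed.

Lemma olinZ S a x : val_ring le nu a -> olin S x -> olin S (a *: x).
Proof.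
move=> Oa; elim=> [|b s x' Ob Ss _ IH]; first by rewrite scaler0; apply: olin0.
by rewrite scalerDr scalerA; apply: olin_cons IH => //; apply: val_ringM.
Qed.

Lemma olin_trans S Y x : (forall y, Y y -> olin S y) -> olin Y x -> olin S x.
Proof.
move=> YS; elim=> [|a y x' Oa Yy _ IH]; first exact: olin0.
by apply: olinD IH; apply: olinZ (YS y Yy).
Qed.

Lemma olin_seq S x : olin S x ->
  exists cs : seq (K * V), (forall c, c \in cs -> val_ring le nu c.1 /\ S c.2) /\
    x = \sum_(c <- cs) c.1 *: c.2.
Proof.
elim=> [|a s x' Oa Ss _ [cs [cs_ok ->]]]; first by exists [::]; rewrite big_nil.
exists ((a, s) :: cs); rewrite big_cons; split=> // c.
by rewrite inE => /predU1P [-> | /cs_ok].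
Qed.

End OSpan.

(* Induction on
   #|C|: pick c in C and a pivot p whose c-th coordinate has minimal valuation;
   subtracting O-multiples of f p clears coordinate c from every vector. *)
Lemma olin_few_generators (I : eqType) (n : nat) (C : {set 'I_n})
    (f : I -> 'rV[K]_n) (s : seq I) :
  (forall i c, i \in s -> c \notin C -> f i 0 c = 0) ->
  exists T : seq I, [/\ (size T <= #|C|)%N, {subset T <= s} &
    forall i, i \in s -> olin (fun v => v \in map f T) (f i)].
Proof.
have [k] := ubnP #|C|; elim: k C f => // k IH C f ltCk f_supp.
have [C0 | [c cC]] := set_0Vmem C.
  exists [::]; split=> // i si; suff -> : f i = 0 by apply: olin0.
  by apply/rowP => j; rewrite mxE f_supp ?C0 ?inE.
have cardC : #|C| = #|C :\ c|.+1 by rewrite (cardsD1 c) cC.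
have ltC'k : (#|C :\ c| < k)%N by rewrite -ltnS -cardC.
pose a i := f i 0 c.
have supp_D1 (g : I -> 'rV[K]_n) : (forall i, i \in s -> g i 0 c = 0) ->
    (forall i c', i \in s -> c' \notin C -> g i 0 c' = 0) ->
    forall i c', i \in s -> c' \notin C :\ c -> g i 0 c' = 0.
  move=> gc0 g_supp i c' si; rewrite !inE negb_and negbK.
  by case/orP=> [/eqP ->| /(g_supp i c' si)] //; apply: gc0.
have [a0 | [p sp [ap_neq0 p_pivot]]] := pivot_or_zero a s.
  have [T [szT sT Tgen]] := IH (C :\ c) f ltC'k (supp_D1 f a0 f_supp).
  by exists T; split=> //; rewrite cardC ltnW.
pose g i := f i - (a i / a p) *: f p.
have gc0 i : i \in s -> g i 0 c = 0.
  by move=> _; rewrite /g !mxE -/(a i) -/(a p) divfK // subrr.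
have g_supp i c' : i \in s -> c' \notin C -> g i 0 c' = 0.
  by move=> si c'C; rewrite /g !mxE !f_supp // mulr0 subr0.
have [T [szT sT Tgen]] := IH (C :\ c) g ltC'k (supp_D1 g gc0 g_supp).
have fp_gen : olin (fun v => v \in map f (p :: T)) (f p).
  by apply: olin_mem; rewrite map_f ?mem_head.
exists (p :: T); split=> [|t|i si]; first by rewrite cardC.
  by rewrite inE => /predU1P [-> | /sT].
have -> : f i = (a i / a p) *: f p + g i by rewrite addrC subrK.
apply: olinD; first by apply: olinZ fp_gen; apply: p_pivot.
apply: olin_trans (Tgen i si) => _ /mapP [t tT ->].
rewrite /g -scaleNr; apply: olinD; last by apply: olinZ fp_gen; apply/val_ringN/p_pivot/sT.
by apply: olin_mem; rewrite map_f // inE tT orbT.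
Qed.

(* Homogenization x |-> (1, x) turns O-affine combinations in K^d into
   O-linear combinations in K^(1+d): the first coordinate records the sum of
   the coefficients. *)
Definition homog (d : nat) (x : 'rV[K]_d) : 'rV[K]_(1 + d) := row_mx (const_mx 1) x.

Lemma homog_comb (d : nat) (J : Type) (js : seq J) (a : J -> K) (y : J -> 'rV[K]_d) :
  \sum_(j <- js) a j *: homog (y j) =
  row_mx (const_mx (\sum_(j <- js) a j)) (\sum_(j <- js) a j *: y j).
Proof.
elim: js => [|j js IH]; first by rewrite !big_nil -row_mx0.
by rewrite !big_cons IH scale_row_mx add_row_mx scalemx_const mulr1 -raddfD.
Qed.

Definition ohull (d : nat) (S : 'rV[K]_d -> Prop) (x : 'rV[K]_d) : Prop :=
  olin (fun v => exists2 s, S s & v = homog s) (homog x).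

Lemma ohull_mem (d : nat) (S : 'rV[K]_d -> Prop) (x : 'rV[K]_d) : S x -> ohull S x.
Proof. by move=> Sx; apply: olin_mem; exists x. Qed.

Lemma ohull_trans (d : nat) (S Y : 'rV[K]_d -> Prop) (x : 'rV[K]_d) :
  (forall y, Y y -> ohull S y) -> ohull Y x -> ohull S x.
Proof. by move=> YS; apply: olin_trans => _ [y Yy ->]; apply: YS. Qed.

(* The O-hull agrees with vconv: an O-linear relation between homogenized
   points has coefficient sum 1, and conversely. *)
Lemma ohull_vconv (d : nat) (S : 'rV[K]_d -> Prop) (x : 'rV[K]_d) :
  ohull S x -> vconv le nu S x.
Proof.
case/olin_seq=> cs [cs_ok x_comb].
pose y (c : K * 'rV[K]_(1 + d)) := rsubmx c.2.
have homog_y c : c \in cs -> c.2 = homog (y c).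
  by case/cs_ok=> _ [s _ c2E]; rewrite /y c2E /homog row_mxKr.
have [sum1 ->] : const_mx 1 = const_mx (\sum_(c <- cs) c.1) :> 'rV[K]_1 /\
    x = \sum_(c <- cs) c.1 *: y c.
  apply/eq_row_mx; rewrite -homog_comb -[row_mx _ _]/(homog x) x_comb big_seq_cond.
  by rewrite [RHS]big_seq_cond; apply: eq_bigr => c /andP [/homog_y <-].
have {}sum1 : \sum_(c <- cs) c.1 = 1.
  by move/(congr1 (fun A : 'rV[K]_1 => A 0 0)): sum1; rewrite !mxE.
pose c0 := (0 : K, 0 : 'rV[K]_(1 + d)).
exists (size cs), (fun i => y (nth c0 cs i)), (fun i => (nth c0 cs i).1).
have nth_ok i : (i < size cs)%N -> val_ring le nu (nth c0 cs i).1 /\ S (y (nth c0 cs i)).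
  move=> lt_i; have [O_c [s Ss c2E]] := cs_ok _ (mem_nth c0 lt_i).
  by rewrite /y c2E row_mxKr.
split.
- case: cs {cs_ok x_comb homog_y nth_ok} sum1 => //.
  by rewrite big_nil => /eqP; rewrite eq_sym oner_eq0.
- by move=> i; case: (nth_ok i (ltn_ord i)).
- by move=> i; case: (nth_ok i (ltn_ord i)).
- by rewrite -sum1 (big_nth c0) big_mkord.
- by rewrite (big_nth c0) big_mkord.
Qed.

Lemma vconv_ohull (d : nat) (S : 'rV[K]_d -> Prop) (x : 'rV[K]_d) :
  vconv le nu S x -> ohull S x.
Proof.
case=> n [y [alpha [_ Sy O_alpha sum1 ->]]]; rewrite /ohull.
have -> : homog (\sum_i alpha i *: y i) = \sum_i alpha i *: homog (y i).
  by rewrite homog_comb sum1.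
apply: big_ind => [||i _]; [exact: olin0 | exact: olinD |].
by apply: olinZ (O_alpha i) _; apply: olin_mem; exists (y i).
Qed.

Local Open Scope fset_scope.

Lemma fsubset_grow (T : choiceType) (X S : {fset T}) (m : nat) :
  S `<=` X -> (#|` S| + m <= #|` X|)%N ->
  exists S' : {fset T}, [/\ S `<=` S', S' `<=` X & #|` S'| = #|` S| + m]%N.
Proof.
elim: m S => [|m IH] S SX le_SmX; first by exists S; rewrite addn0.
have /fsubsetPn [y yX yS] : ~~ (X `<=` S).
  apply: contraTN le_SmX => /fsubset_leq_card le_XS.
  by rewrite -ltnNge addnS ltnS (leq_trans le_XS) ?leq_addr.
have ySX : y |` S `<=` X by rewrite fsubUset fsub1set yX.
have le_ySmX : (#|` y |` S| + m <= #|` X|)%N by rewrite cardfsU1 yS add1n addSn -addnS.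
have [S' [yS_S' S'X cardS']] := IH _ ySX le_ySmX.
exists S'; split=> //; first exact: fsubset_trans (fsubsetUr _ _) yS_S'.
by rewrite cardS' cardfsU1 yS add1n addSn addnS.
Qed.

Lemma ohull_caratheodory (d : nat) (X : {fset 'rV[K]_d}) :
  exists S : {fset 'rV[K]_d}, [/\ S `<=` X, (#|` S| <= d.+1)%N &
    forall x, x \in X -> ohull (fun q => q \in S) x].
Proof.
have [|T [szT TX Tgen]] := @olin_few_generators _ (1 + d) setT (@homog d) (enum_fset X).
  by move=> i c _; rewrite inE.
exists [fset x | x in T]; split.
- by apply/fsubsetP => x; rewrite inE => /TX.
- rewrite card_imfset //= cardsT card_ord in szT *.
  exact: leq_trans (size_undup T) szT.
move=> x /Tgen; apply: olin_trans => _ /mapP [t tT ->].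
by apply: olin_mem; exists t; rewrite ?inE.
Qed.

(* At each step X_0 is a (d+1)-subset whose O-hull contains
   all of X, which exists by Carathéodory; recurse on the rest. *)
Lemma nested_ohull_partition (d r : nat) (X : {fset 'rV[K]_d}) :
  (d.+1 * r < #|` X|)%N ->
  exists Xs : nat -> {fset 'rV[K]_d},
  [/\ forall x, x \in X <-> exists2 i, (i <= r)%N & x \in Xs i,
      forall i j, (i <= r)%N -> (j <= r)%N -> i != j -> Xs i `&` Xs j = fset0,
      forall i, (i < r)%N -> #|` Xs i| = d.+1,
      #|` Xs r| = (#|` X| - d.+1 * r)%N
    & forall i j x, (i <= j <= r)%N -> x \in Xs j -> ohull (fun q => q \in Xs i) x].
Proof.
elim: r X => [|r IH] X ltX.
  exists (fun=> X); split=> //; first by move=> x; split=> [xX | [i _ //]]; exists 0%N.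
  - by case=> [|i] [|j].
  - by rewrite muln0 subn0.
  - by move=> i j x _; apply: ohull_mem.
have le_dX : (d.+1 <= #|` X|)%N by apply: leq_trans (ltnW ltX); rewrite mulnS leq_addr.
have [S0 [S0X cardS0 XS0]] := ohull_caratheodory X.
have le_S0X : (#|` S0| + (d.+1 - #|` S0|) <= #|` X|)%N by rewrite subnKC.
have [S [S0S SX]] := fsubset_grow S0X le_S0X; rewrite subnKC // => cardS.
have XS x : x \in X -> ohull (fun q => q \in S) x.
  move=> /XS0; apply: ohull_trans => y S0y; apply: ohull_mem.
  exact: (fsubsetP S0S).
have ltXS : (d.+1 * r < #|` X `\` S|)%N.
  by rewrite cardfsDS // cardS ltn_subRL -mulnS.
have [Xs [cover disj size_full size_last nested]] := IH _ ltXS.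
have Xs_sub i x : (i <= r)%N -> x \in Xs i -> x \in X `\` S.
  by move=> le_ir xXi; apply/cover; exists i.
exists (fun i => if i is i'.+1 then Xs i' else S); split.
- move=> x; split=> [xX | [[|i] le_ir xXi]].
  + have [xS | xNS] := boolP (x \in S); first by exists 0%N.
    have /cover [i le_ir xXi] : x \in X `\` S by rewrite inE xNS xX.
    by exists i.+1.
  + exact: (fsubsetP SX).
  + by have := Xs_sub i x le_ir xXi; rewrite inE => /andP [].
- move=> [|i] [|j] //= le_ir le_jr ij; last exact: disj.
  + apply/fsetP => x; rewrite !inE; apply/negP => /andP [xS /(Xs_sub j x le_jr)].
    by rewrite inE xS.
  + apply/fsetP => x; rewrite !inE; apply/negP => /andP [/(Xs_sub i x le_ir)].
    by rewrite inE => /andP [/negP].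
- by move=> [|i] //= /size_full.
- by rewrite size_last cardfsDS // cardS mulnS subnDA.
- move=> [|i] [|j] x //= le_ijr xXj; last exact: nested le_ijr xXj.
  + exact: XS (fsubsetP SX x xXj).
  + by apply: XS; have := Xs_sub j x le_ijr xXj; rewrite inE => /andP [].
Qed.

End ValuedField.

Local Open Scope fset_scope.

Theorem theorem4p15 (K : fieldType) (G : zmodType) (le : rel G)
    (nu : K -> option G) (d r : nat) (X : {fset 'rV[K]_d}) :
  is_valuation le nu -> (1 <= d)%N -> (1 <= r)%N ->
  ((d.+1) * (r - 1) + 1 <= #|` X|)%N ->
  exists Xs : 'I_r -> {fset 'rV[K]_d},
    [/\ (forall x, x \in X <-> exists i, x \in Xs i),
        (forall i j, i != j -> Xs i `&` Xs j = fset0),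
        (forall i : 'I_r, (i < r.-1)%N -> #|` Xs i| = d.+1),
        (forall i : 'I_r, nat_of_ord i = r.-1 -> #|` Xs i| = (#|` X| - d.+1 * (r - 1))%N)
      & ((forall i j : 'I_r, (i <= j)%N -> forall p,
            vconv le nu (fun q => q \in Xs j) p -> vconv le nu (fun q => q \in Xs i) p)
      /\ (forall i : 'I_r, nat_of_ord i = r.-1 ->
            Xs i != fset0 /\
            forall x, x \in Xs i -> forall k : 'I_r, vconv le nu (fun q => q \in Xs k) x))].
Proof.
move=> nu_valuation _; case: r => [|r] // _; rewrite subSS subn0 addn1 => ltX.
have [Xs [cover disj size_full size_last nested]] :=
  nested_ohull_partition nu_valuation ltX.
have le_r (i : 'I_r.+1) : (i <= r)%N by rewrite -ltnS ltn_ord.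
exists (fun i => Xs i); split=> [x | i j ij | i /size_full // | i /= -> // |].
- rewrite cover; split=> [[i le_ir xXi] | [i xXi]]; last by exists i.
  by exists (Ordinal (le_ir : (i < r.+1)%N)).
- by apply: disj.
split=> [i j le_ij p | i /= ->].
  move=> /(vconv_ohull nu_valuation) p_hull; apply: ohull_vconv.
  by apply: (ohull_trans nu_valuation _ p_hull) => x; apply: nested; rewrite le_ij le_r.
split=> [|x xXr k]; first by rewrite -cardfs_gt0 size_last subn_gt0.
by apply: ohull_vconv; apply: nested xXr; rewrite le_r leqnn.
Qed.
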